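(* Let $N=(S,T,F,M_0,\ell)$ be a plain structural conflict net. If $N$ has a fully reachable pure $\mathsf M$, then there are $\sigma\in\mathrm{Act}^*$ and $a,b,c\in\mathrm{Act}$ with $a\ne c$ such that $\langle\sigma,\{\{a,c\}\}\rangle\notin\mathcal F(N)$, $\langle\sigma,\{\{b\}\}\rangle\notin\mathcal F(N)$ and $\langle\sigma,\{\{a,b\},\{b,c\}\}\rangle\in\mathcal F(N)$.
   Context: Fix visible actions $\mathrm{Act}$ and $\tau\notin\mathrm{Act}$. A Petri net has disjoint $S,T$, $F:(S\times T)\cup(T\times S)\to\mathbb N$, $M_0\in\mathbb N^S$, $\ell:T\to\mathrm{Act}\cup\{\tau\}$. ${}^\bullet x(y)=F(y,x)$, $x^\bullet(y)=F(x,y)$, extended additively; multiset $\le,\cap,\cup$ pointwise $\le$, min, max. For finite nonempty multiset $G$ of transitions, $M[G\rangle M'$ iff ${}^\bullet G\le M$ and $M'=M-{}^\bullet G+G^\bullet$; reachable markings as usual; $t\smile u$ iff $M[\{t\}+\{u\}\rangle$ for some reachable $M$. Structural conflict net: $t\smile u\Rightarrow{}^\bullet t\cap{}^\bullet u=\emptyset$. Plain: $\ell$ injective and never $\tau$. Fully reachable pure $\mathsf M$: $t,u,v\in T$ with ${}^\bullet t\cap{}^\bullet u\ne\emptyset$, ${}^\bullet u\cap{}^\bullet v\ne\emptyset$, ${}^\bullet t\cap{}^\bullet v=\emptyset$ and a reachable $M$ with ${}^\bullet t\cup{}^\bullet u\cup{}^\bullet v\le M$. $M\xrightarrow{\alpha}M'$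 iff $M[t\rangle M'$ with $\ell(t)=\alpha$; $\Rightarrow$ reflexive transitive closure of $\xrightarrow{\tau}$; $M\overset{a_1\cdots a_n}{\Longrightarrow}M'$ iff $M\Rightarrow\xrightarrow{a_1}\Rightarrow\cdots\xrightarrow{a_n}\Rightarrow M'$. For a step $A$ (finite nonempty multiset over $\mathrm{Act}$), $M\xrightarrow{A}$ iff $M[G\rangle$ for a finite multiset $G$ of transitions, none labelled $\tau$, with label multiset $A$. $\mathcal F(N)$, the set of step failure pairs, consists of all $\langle\sigma,X\rangle$ with $\sigma\in\mathrm{Act}^*$ and $X$ a finite set of steps such that some $M$ has $M_0\overset{\sigma}{\Longrightarrow}M$, $M\not\xrightarrow{\tau}$ and $M\not\xrightarrow{A}$ for all $A\in X$. *)

From Stdlib Require Import List Arith Permutation.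
Import ListNotations.

(* A labelled Petri net over visible actions Act.  Places and transitions are
   separate types (hence disjoint).  The label [None] stands for tau. *)
Record net (Act : Type) := Net {
  place : Type;
  trans : Type;
  F_st : place -> trans -> nat;
  F_ts : trans -> place -> nat;
  M0 : place -> nat;
  lab : trans -> option Act
}.
Arguments place {Act}. Arguments trans {Act}. Arguments F_st {Act}.
Arguments F_ts {Act}. Arguments M0 {Act}. Arguments lab {Act}.

Section Semantics.
Context {Act : Type} (N : net Act).

Definition marking := place N -> nat.

(* preset / postset of a finite multiset of transitions, given as a list *)
Definition preG (G : list (trans N)) (s : place N) : nat :=
  fold_right (fun t acc => F_st N s t + acc) 0 G.
Definition postG (G : list (trans N)) (s : place N) : nat :=
  fold_right (fun t acc => F_ts N t s + acc) 0 G.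

Definition fires (M : marking) (G : list (trans N)) (M' : marking) : Prop :=
  G <> [] /\ (forall s, preG G s <= M s) /\
  (forall s, M' s = M s - preG G s + postG G s).

Definition enabled (M : marking) (G : list (trans N)) : Prop :=
  exists M', fires M G M'.

Inductive reachable : marking -> Prop :=
| reach0 : reachable (M0 N)
| reachS : forall M t M', reachable M -> fires M [t] M' -> reachable M'.

Definition conc (t u : trans N) : Prop :=
  exists M, reachable M /\ enabled M [t; u].

Definition structural_conflict : Prop :=
  forall t u, conc t u -> forall s, Nat.min (F_st N s t) (F_st N s u) = 0.

Definition plain : Prop :=
  (forall t u, lab N t = lab N u -> t = u) /\ (forall t, lab N t <> None).

Definition fully_reachable_pure_M : Prop :=
  exists t u v,
    (exists s, Nat.min (F_st N s t) (F_st N s u) <> 0) /\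
    (exists s, Nat.min (F_st N s u) (F_st N s v) <> 0) /\
    (forall s, Nat.min (F_st N s t) (F_st N s v) = 0) /\
    exists M, reachable M /\
      forall s, Nat.max (Nat.max (F_st N s t) (F_st N s u)) (F_st N s v) <= M s.

Definition lstep (M : marking) (alpha : option Act) (M' : marking) : Prop :=
  exists t, lab N t = alpha /\ fires M [t] M'.

Inductive tau_star : marking -> marking -> Prop :=
| tau_refl : forall M, tau_star M M
| tau_step : forall M M1 M', lstep M None M1 -> tau_star M1 M' -> tau_star M M'.

Inductive weak_trace : marking -> list Act -> marking -> Prop :=
| wt_nil : forall M M', tau_star M M' -> weak_trace M [] M'
| wt_cons : forall M M1 M2 M' a sigma,
    tau_star M M1 -> lstep M1 (Some a) M2 -> weak_trace M2 sigma M' ->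
    weak_trace M (a :: sigma) M'.

(* M --A--> for a step A (finite nonempty multiset of visible actions, as a list) *)
Definition step_enabled (M : marking) (A : list Act) : Prop :=
  exists G : list (trans N),
    (forall t, In t G -> lab N t <> None) /\
    Permutation (map (lab N) G) (map Some A) /\
    enabled M G.

(* <sigma, X> ∈ F(N), X a finite set of steps given as a list of lists *)
Definition step_failure (sigma : list Act) (X : list (list Act)) : Prop :=
  exists M, weak_trace (M0 N) sigma M /\
    (~ exists M', lstep M None M') /\
    (forall A, In A X -> ~ step_enabled M A).

End Semantics.

From Stdlib Require Import List Lia Permutation FunctionalExtensionality.
Import ListNotations.

(* In a plain net there are no tau moves and transitions are determined by their
   labels, so every visible trace leads to a unique marking, and the step failures
   after a trace are exactly the steps refused by that marking.  Take sigma leading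
   to the marking M that covers the presets of the M-shaped transitions t, u, v.
   At M the step {a, c} is enabled because t and v have disjoint presets, and {b}
   is enabled.  If {a, b} were enabled at M, then t and u would be concurrent at
   the reachable marking M although their presets overlap, contradicting
   structural conflict; symmetrically for {b, c}. *)

Lemma enabled_of_preG_le {Act : Type} (N : net Act) M G :
  G <> [] -> (forall s, preG N G s <= M s) -> enabled N M G.
Proof.
  intros HG Hpre.
  exists (fun s => M s - preG N G s + postG N G s); repeat split; auto.
Qed.

Lemma preG_pair {Act : Type} (N : net Act) x y s :
  preG N [x; y] s = F_st N s x + F_st N s y.
Proof. unfold preG; simpl; lia. Qed.

Section PlainNet.
Context {Act : Type} (N : net Act).
Hypothesis plainN : plain N.

Lemma tau_star_eq M M' : tau_star N M M' -> M = M'.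
Proof.
  destruct 1 as [|M M1 M' [t [tau_t _]] _]; [reflexivity|].
  exfalso; exact (proj2 plainN t tau_t).
Qed.

Lemma no_tau_step M : ~ exists M', lstep N M None M'.
Proof. intros [M' [t [tau_t _]]]; exact (proj2 plainN t tau_t). Qed.

Lemma weak_trace_snoc M sigma M1 a M2 :
  weak_trace N M sigma M1 -> lstep N M1 (Some a) M2 ->
  weak_trace N M (sigma ++ [a]) M2.
Proof.
  induction 1 as [M M' Htau|]; intros Ha; simpl.
  - eapply wt_cons; [exact Htau | exact Ha | constructor; constructor].
  - eapply wt_cons; eauto.
Qed.

Lemma reachable_weak_trace M : reachable N M -> exists sigma, weak_trace N (M0 N) sigma M.
Proof.
  induction 1 as [|M t M' _ [sigma Hsigma] Hfire].
  - exists []; constructor; constructor.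
  - destruct (lab N t) as [a|] eqn:Ht; [|exfalso; exact (proj2 plainN t Ht)].
    exists (sigma ++ [a]); eapply weak_trace_snoc; [exact Hsigma|].
    exists t; auto.
Qed.

Lemma lstep_visible_deterministic M a M1 M2 :
  lstep N M (Some a) M1 -> lstep N M (Some a) M2 -> M1 = M2.
Proof.
  intros [t1 [Ht1 [_ [_ HM1]]]] [t2 [Ht2 [_ [_ HM2]]]].
  assert (t1 = t2) as <- by (apply (proj1 plainN); congruence).
  apply functional_extensionality; intro s; rewrite HM1, HM2; reflexivity.
Qed.

Lemma weak_trace_deterministic M sigma M1 M2 :
  weak_trace N M sigma M1 -> weak_trace N M sigma M2 -> M1 = M2.
Proof.
  intros H1; revert M2; induction H1 as [M M1 Htau|M P Q M1 a sigma HtauP HaQ _ IH];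
    intros M2 H2; inversion H2 as [? ? Htau2|? P' Q' ? ? ? HtauP' HaQ' H2']; subst.
  - now rewrite <- (tau_star_eq _ _ Htau), <- (tau_star_eq _ _ Htau2).
  - apply IH.
    rewrite <- (tau_star_eq _ _ HtauP) in HaQ.
    rewrite <- (tau_star_eq _ _ HtauP') in HaQ'.
    now rewrite (lstep_visible_deterministic _ _ _ _ HaQ HaQ').
Qed.

Lemma step_failure_at M sigma X :
  weak_trace N (M0 N) sigma M ->
  step_failure N sigma X <-> (forall A, In A X -> ~ step_enabled N M A).
Proof.
  intros Hsigma; split.
  - intros [M' [Hsigma' [_ Hrefuse]]].
    now rewrite (weak_trace_deterministic _ _ _ _ Hsigma Hsigma').
  - intros Hrefuse; exists M; split; [exact Hsigma|split; [apply no_tau_step|exact Hrefuse]].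
Qed.

Lemma step_enabled_of_enabled M G A :
  map (lab N) G = map Some A -> enabled N M G -> step_enabled N M A.
Proof.
  intros HGA HG; exists G; split; [|rewrite HGA; split; [apply Permutation_refl|exact HG]].
  intros t _; exact (proj2 plainN t).
Qed.

Lemma step_enabled_pair_presets M x y a b :
  lab N x = Some a -> lab N y = Some b -> step_enabled N M [a; b] ->
  forall s, F_st N s x + F_st N s y <= M s.
Proof.
  intros Hx Hy [G [_ [HGab [M' [_ [Hpre _]]]]]] s.
  destruct G as [|g1 [|g2 [|]]];
    try (apply Permutation_length in HGab; discriminate).
  specialize (Hpre s); unfold preG in Hpre; simpl in Hpre.
  assert (label_eq : forall g t, lab N g = lab N t -> g = t) by apply plainN.
  destruct (Permutation_length_2_inv HGab) as [Heq|Heq]; injection Heq as H1 H2.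
  - rewrite (label_eq g1 x), (label_eq g2 y) in Hpre by congruence; lia.
  - rewrite (label_eq g1 y), (label_eq g2 x) in Hpre by congruence; lia.
Qed.

End PlainNet.

Lemma structural_conflict_disjoint_presets {Act : Type} (N : net Act) M x y :
  structural_conflict N -> reachable N M ->
  (forall s, F_st N s x + F_st N s y <= M s) ->
  forall s, Nat.min (F_st N s x) (F_st N s y) = 0.
Proof.
  intros Hsc HM Hxy; apply Hsc; exists M; split; [exact HM|].
  apply enabled_of_preG_le; [discriminate|]; intro s; rewrite preG_pair; apply Hxy.
Qed.

Theorem lemma5p4 (Act : Type) (N : net Act) :
  plain N -> structural_conflict N -> fully_reachable_pure_M N ->
  exists (sigma : list Act) (a b c : Act),
    a <> c /\
    ~ step_failure N sigma [[a; c]] /\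
    ~ step_failure N sigma [[b]] /\
    step_failure N sigma [[a; b]; [b; c]].
Proof.
  intros Hp Hsc [t [u [v [[s1 Htu] [[s2 Huv] [Htv [M [HM Hcover]]]]]]]].
  destruct (reachable_weak_trace N Hp M HM) as [sigma Hsigma].
  destruct (lab N t) as [a|] eqn:Ha; [|exfalso; exact (proj2 Hp t Ha)].
  destruct (lab N u) as [b|] eqn:Hb; [|exfalso; exact (proj2 Hp u Hb)].
  destruct (lab N v) as [c|] eqn:Hc; [|exfalso; exact (proj2 Hp v Hc)].
  exists sigma, a, b, c.
  assert (Htv_enabled : enabled N M [t; v]).
  { apply enabled_of_preG_le; [discriminate|]; intro s.
    rewrite preG_pair; specialize (Hcover s); specialize (Htv s); lia. }
  assert (Hu_enabled : enabled N M [u]).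
  { apply enabled_of_preG_le; [discriminate|]; intro s.
    specialize (Hcover s); unfold preG; simpl; lia. }
  rewrite !(step_failure_at N Hp M sigma _ Hsigma).
  split; [|split; [|split]].
  - intros <-; assert (t = v) as <- by (apply (proj1 Hp); congruence).
    apply Htu; specialize (Htv s1); lia.
  - intros Hrefuse; apply (Hrefuse [a; c]); [now left|].
    apply (step_enabled_of_enabled N Hp M [t; v]); [simpl; congruence|exact Htv_enabled].
  - intros Hrefuse; apply (Hrefuse [b]); [now left|].
    apply (step_enabled_of_enabled N Hp M [u]); [simpl; congruence|exact Hu_enabled].
  - intros A [<-|[<-|[]]] Hstep.
    + apply Htu, (structural_conflict_disjoint_presets N M t u Hsc HM).
      exact (step_enabled_pair_presets N Hp M t u a b Ha Hb Hstep).
    + apply Huv, (structural_conflict_disjoint_presets N M u v Hsc HM).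
      exact (step_enabled_pair_presets N Hp M u v b c Hb Hc Hstep).
Qed.
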